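(* Let $G\subset\mathrm{Homeo}_+([0,1])$ be a group without linked fixed points. Then the set of pairs of successive fixed points of elements of $G$ is at most countable.
   Context: For a group $G$ of homeomorphisms of $[0,1]$, a pair of successive fixed points of $G$ is a pair $\{a,b\}$, $a<b$, such that $(a,b)$ is a connected component of $[0,1]\setminus \mathrm{Fix}(g)$ for some $g\in G$. Two pairs $\{a,b\}$ and $\{c,d\}$ are linked if $(a,b)\cap\{c,d\}$ or $(c,d)\cap\{a,b\}$ consists of exactly one point. $G$ is without linked fixed points if no two pairs of successive fixed points of $G$ are linked. *)

From Stdlib Require Import Reals.
Open Scope R_scope.

(* An element of Homeo_+([0,1]), represented by a function R -> R whose
   restriction to [0,1] is a continuous, strictly increasing bijection of [0,1]
   onto itself (values outside [0,1] are irrelevant). *)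
Definition homeo_plus01 (f : R -> R) : Prop :=
  (forall x, 0 <= x <= 1 -> 0 <= f x <= 1) /\
  (forall y, 0 <= y <= 1 -> exists x, 0 <= x <= 1 /\ f x = y) /\
  (forall x y, 0 <= x <= 1 -> 0 <= y <= 1 -> x < y -> f x < f y) /\
  (forall x, 0 <= x <= 1 ->
     continuity_pt (fun t => f (Rmax 0 (Rmin 1 t))) x).

Definition is_subgroup_homeo01 (G : (R -> R) -> Prop) : Prop :=
  (forall f, G f -> homeo_plus01 f) /\
  G (fun x => x) /\
  (forall f g, G f -> G g -> G (fun x => f (g x))) /\
  (forall f, G f -> exists h, G h /\
       forall x, 0 <= x <= 1 -> h (f x) = x /\ f (h x) = x).

(* (a,b) is a connected component of [0,1] \ Fix(g): a < b in [0,1],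
   no fixed point of g strictly between a and b, and a, b fixed
   (i.e. (a,b) is maximal). *)
Definition succ_fixed (g : R -> R) (a b : R) : Prop :=
  0 <= a /\ a < b /\ b <= 1 /\ g a = a /\ g b = b /\
  (forall x, a < x < b -> g x <> x).

Definition succ_fixed_pair (G : (R -> R) -> Prop) (a b : R) : Prop :=
  exists g, G g /\ succ_fixed g a b.

Definition exactly_one_in (a b c d : R) : Prop :=
  ((a < c < b) /\ ~ (a < d < b)) \/ (~ (a < c < b) /\ (a < d < b)).

Definition linked (a b c d : R) : Prop :=
  exactly_one_in a b c d \/ exactly_one_in c d a b.

Definition without_linked_fixed_points (G : (R -> R) -> Prop) : Prop :=
  forall a b c d, succ_fixed_pair G a b -> succ_fixed_pair G c d ->
    ~ linked a b c d.

Definition at_most_countable (S : R * R -> Prop) : Prop :=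
  exists h : R * R -> nat, forall p q, S p -> S q -> h p = h q -> p = q.

From Stdlib Require Import ZArith Reals Lra Cantor Ranalysis5 ClassicalEpsilon.
Open Scope R_scope.

(* Every pair (c,d) is realised by some h in G which moves every point of
   (c,d) to the right (take the inverse of a generator moving points left;
   by the intermediate value theorem the direction is constant on (c,d)).
   Since h c = c, continuity gives rationals c < q < x < d with h q <= x.
   We call (q,x) a witness of (c,d).  A witness determines the pair: if two
   pairs (c,d), (c',d') with c < c' shared it, no-linking forces
   c < c' < d' < d, and then the conjugate pair (h c', h d') is linked with
   (c',d'), because c' < h c' < h q <= x < d' < h d'.  Equal left endpoints
   force equal right endpoints, again by no-linking.  Enumerating the
   nonnegative rationals by nat then yields an injection into nat.
*)

Lemma clamp_id u : 0 <= u <= 1 -> Rmax 0 (Rmin 1 u) = u.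
Proof.
  intros Hu. unfold Rmax, Rmin.
  destruct (Rle_dec 1 u); destruct (Rle_dec 0 _); lra.
Qed.

Lemma homeo_range f x : homeo_plus01 f -> 0 <= x <= 1 -> 0 <= f x <= 1.
Proof. intros [Hr _]; auto. Qed.

Lemma homeo_increasing f x y :
  homeo_plus01 f -> 0 <= x <= 1 -> 0 <= y <= 1 -> x < y -> f x < f y.
Proof. intros (_ & _ & Hinc & _); auto. Qed.

Lemma homeo_continuous_at f x0 eps :
  homeo_plus01 f -> 0 <= x0 <= 1 -> 0 < eps ->
  exists del, 0 < del /\
    forall t, 0 <= t <= 1 -> Rabs (t - x0) < del -> Rabs (f t - f x0) < eps.
Proof.
  intros (_ & _ & _ & Hc) Hx Heps.
  destruct (Hc x0 Hx eps Heps) as [del [Hdel Hlim]].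
  exists del; split; [exact Hdel|].
  intros t Ht Htx. destruct (Req_dec t x0) as [->|Hne].
  - unfold Rminus. rewrite Rplus_opp_r, Rabs_R0. exact Heps.
  - specialize (Hlim t). simpl in Hlim. unfold R_dist in Hlim.
    rewrite !clamp_id in Hlim by lra.
    apply Hlim. split; [split; [exact I | auto] | exact Htx].
Qed.

Lemma homeo_fixed_between h y z :
  homeo_plus01 h -> 0 <= y -> y < z -> z <= 1 ->
  (h y - y) * (h z - z) < 0 -> exists w, y <= w <= z /\ h w = w.
Proof.
  intros Hh Hy Hyz Hz Hsign.
  set (F := fun t => h (Rmax 0 (Rmin 1 t)) - t).
  assert (HF : forall a, y <= a <= z -> continuity_pt F a).
  { intros a Ha. destruct Hh as (_ & _ & _ & Hc).
    apply (continuity_pt_minus _ id); [apply Hc; lra|].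
    apply derivable_continuous_pt, derivable_pt_id. }
  assert (HFy : F y = h y - y) by (unfold F; rewrite clamp_id by lra; reflexivity).
  assert (HFz : F z = h z - z) by (unfold F; rewrite clamp_id by lra; reflexivity).
  destruct (Rlt_le_dec (h y - y) 0) as [Hneg|Hpos].
  - assert (0 < h z - z) by nra.
    destruct (IVT_interv F y z HF Hyz) as [w [Hw HFw]]; try lra.
    exists w; split; [exact Hw|].
    unfold F in HFw. rewrite clamp_id in HFw by lra. lra.
  - assert (Hyp : 0 < h y - y).
    { destruct Hpos as [Hp|He]; [exact Hp|]. rewrite <- He in Hsign. lra. }
    assert (Hzn : h z - z < 0).
    { destruct (Rlt_le_dec (h z - z) 0); [assumption|nra]. }
    destruct (IVT_interv (fun t => - F t) y z) as [w [Hw HFw]]; try lra.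
    { intros a Ha. apply continuity_pt_opp, HF, Ha. }
    exists w; split; [exact Hw|].
    unfold F in HFw. rewrite clamp_id in HFw by lra. lra.
Qed.

Lemma succ_fixed_direction h c d y z :
  homeo_plus01 h -> succ_fixed h c d -> c < y < d -> c < z < d ->
  y < h y -> z < h z.
Proof.
  intros Hh (Hc & _ & Hd & _ & _ & Hfree) Hy Hz Hhy.
  destruct (Rlt_le_dec z (h z)) as [Hup|Hdown]; [exact Hup|exfalso].
  destruct Hdown as [Hdown|Hfix]; [|apply (Hfree z); auto].
  destruct (Rtotal_order y z) as [Hyz|[<-|Hzy]]; [| lra |].
  - destruct (homeo_fixed_between h y z Hh) as [w [Hw Hhw]]; try nra.
    apply (Hfree w); [lra | exact Hhw].
  - destruct (homeo_fixed_between h z y Hh) as [w [Hw Hhw]]; try nra.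
    apply (Hfree w); [lra | exact Hhw].
Qed.

Lemma inverse_succ_fixed g hi c d :
  (forall x, 0 <= x <= 1 -> hi (g x) = x /\ g (hi x) = x) ->
  succ_fixed g c d -> succ_fixed hi c d.
Proof.
  intros Hinv (Hc & Hcd & Hd & Hgc & Hgd & Hfree).
  repeat split; try lra.
  - rewrite <- Hgc at 1. apply Hinv; lra.
  - rewrite <- Hgd at 1. apply Hinv; lra.
  - intros t Ht Hfix. apply (Hfree t Ht).
    rewrite <- Hfix at 1. apply Hinv; lra.
Qed.

Lemma conjugate_succ_fixed h hi g a b :
  homeo_plus01 h -> homeo_plus01 hi -> homeo_plus01 g ->
  (forall x, 0 <= x <= 1 -> hi (h x) = x /\ h (hi x) = x) ->
  succ_fixed g a b -> succ_fixed (fun y => h (g (hi y))) (h a) (h b).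
Proof.
  intros Hh Hhi Hg Hinv (Ha & Hab & Hb & Hga & Hgb & Hfree).
  assert (Ha1 : 0 <= a <= 1) by lra. assert (Hb1 : 0 <= b <= 1) by lra.
  pose proof (homeo_range h a Hh Ha1). pose proof (homeo_range h b Hh Hb1).
  pose proof (homeo_increasing h a b Hh Ha1 Hb1 Hab).
  repeat split; try lra.
  - destruct (Hinv a Ha1) as [-> _]. rewrite Hga. reflexivity.
  - destruct (Hinv b Hb1) as [-> _]. rewrite Hgb. reflexivity.
  - intros y Hy Hfix.
    assert (Hy1 : 0 <= y <= 1) by lra.
    pose proof (homeo_range hi y Hhi Hy1) as Hz1.
    assert (Hin : a < hi y < b).
    { split.
      - rewrite <- (proj1 (Hinv a Ha1)) at 1. apply (homeo_increasing hi); [exact Hhi|lra..].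
      - rewrite <- (proj1 (Hinv b Hb1)). apply (homeo_increasing hi); [exact Hhi|lra..]. }
    apply (Hfree (hi y) Hin).
    pose proof (homeo_range g (hi y) Hg Hz1) as Hgz.
    destruct (Hinv (g (hi y)) Hgz) as [E _].
    rewrite <- E, Hfix. reflexivity.
Qed.

Lemma expanding_generator G c d :
  is_subgroup_homeo01 G -> succ_fixed_pair G c d ->
  exists h, G h /\ succ_fixed h c d /\ forall t, c < t < d -> t < h t.
Proof.
  intros (Hhom & _ & _ & Hinv) [g [Hg Hs]].
  set (m := (c + d) / 2).
  assert (Hm : c < m < d) by (destruct Hs as (_ & ? & _); unfold m; lra).
  assert (Hmove : exists h, G h /\ succ_fixed h c d /\ m < h m).
  { pose proof Hs as (Hc & _ & Hd & _ & _ & Hfree).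
    destruct (Rtotal_order m (g m)) as [Hup|[Hfix|Hdown]].
    - exists g; auto.
    - exfalso. apply (Hfree m Hm). auto.
    - destruct (Hinv g Hg) as [hi [Hhi Hghi]].
      exists hi. split; [exact Hhi|]. split; [apply (inverse_succ_fixed g); auto|].
      assert (Hm1 : 0 <= m <= 1) by lra.
      pose proof (homeo_range hi m (Hhom hi Hhi) Hm1) as Hhim.
      destruct (Rlt_le_dec m (hi m)) as [Hlt|Hle]; [exact Hlt|exfalso].
      pose proof (proj2 (Hghi m Hm1)) as E.
      destruct Hle as [Hlt|Heq].
      + pose proof (homeo_increasing g _ _ (Hhom g Hg) Hhim Hm1 Hlt). lra.
      + rewrite Heq in E. lra. }
  destruct Hmove as [h [Hh [Hsh Hhm]]].
  exists h. split; [exact Hh|]. split; [exact Hsh|].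
  intros t Ht. apply (succ_fixed_direction h c d m t (Hhom h Hh) Hsh Hm Ht Hhm).
Qed.

Lemma unlinked_right G a b c d :
  without_linked_fixed_points G -> succ_fixed_pair G a b -> succ_fixed_pair G c d ->
  a < c < b -> d < b.
Proof.
  intros HW Hab Hcd Hc.
  destruct (Rlt_le_dec d b) as [Hdb|Hbd]; [exact Hdb|exfalso].
  apply (HW a b c d Hab Hcd). left. left. split; [exact Hc | lra].
Qed.

Lemma unlinked_left G a b c d :
  without_linked_fixed_points G -> succ_fixed_pair G a b -> succ_fixed_pair G c d ->
  a < d < b -> a < c.
Proof.
  intros HW Hab Hcd Hd.
  destruct (Rlt_le_dec a c) as [Hac|Hca]; [exact Hac|exfalso].
  apply (HW a b c d Hab Hcd). left. right. split; [lra | exact Hd].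
Qed.

Definition pair_witness (G : (R -> R) -> Prop) (c d q x : R) : Prop :=
  exists h, G h /\ succ_fixed h c d /\ c < q < x /\ x < d /\ h q <= x /\
    forall t, c < t < d -> t < h t.

Lemma witness_is_pair G c d q x :
  pair_witness G c d q x -> succ_fixed_pair G c d.
Proof. intros [h [Hh [Hs _]]]. exists h. auto. Qed.

(* Two pairs sharing a witness cannot be strictly nested: otherwise the
   outer expanding element would push the inner pair onto a linked one. *)
Lemma witness_no_inner_pair G c d c' d' q x :
  is_subgroup_homeo01 G -> without_linked_fixed_points G ->
  pair_witness G c d q x -> pair_witness G c' d' q x -> ~ c < c'.
Proof.
  intros HG HW Hw Hw' Hcc.
  pose proof (witness_is_pair _ _ _ _ _ Hw) as P.
  pose proof (witness_is_pair _ _ _ _ _ Hw') as P'.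
  destruct Hw as [h [Hh [Hs (Hq & Hx & Hhq & Hup)]]].
  destruct Hw' as [h' [Hh' [Hs' (Hq' & Hx' & _ & _)]]].
  assert (Hdd : d' < d) by (apply (unlinked_right G c d c' d' HW P P'); lra).
  destruct HG as (Hhom & _ & Hcomp & Hinv).
  destruct (Hinv h Hh) as [hi [Hhi Hhhi]].
  assert (PC : succ_fixed_pair G (h c') (h d')).
  { exists (fun y => h (h' (hi y))). split.
    - apply Hcomp; [exact Hh | apply (Hcomp h' hi Hh' Hhi)].
    - apply conjugate_succ_fixed; auto. }
  pose proof Hs as (Hc & _ & Hd & _).
  pose proof (homeo_increasing h c' q (Hhom h Hh)) as Hmono.
  pose proof (Hup c') as Hc'. pose proof (Hup d') as Hd'.
  assert (Hbound : h d' < d').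
  { apply (unlinked_right G c' d' (h c') (h d') HW P' PC).
    split; [apply Hc'; lra|]. apply Rlt_le_trans with (h q); [apply Hmono; lra|lra]. }
  assert (d' < h d') by (apply Hd'; lra).
  lra.
Qed.

Lemma witness_determines_pair G c d c' d' q x :
  is_subgroup_homeo01 G -> without_linked_fixed_points G ->
  pair_witness G c d q x -> pair_witness G c' d' q x -> c = c' /\ d = d'.
Proof.
  intros HG HW Hw Hw'.
  assert (Ec : c = c').
  { destruct (Rtotal_order c c') as [Hlt|[Heq|Hgt]]; [exfalso | exact Heq | exfalso].
    - exact (witness_no_inner_pair G c d c' d' q x HG HW Hw Hw' Hlt).
    - exact (witness_no_inner_pair G c' d' c d q x HG HW Hw' Hw Hgt). }
  subst c'. split; [reflexivity|].
  pose proof (witness_is_pair _ _ _ _ _ Hw) as P.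
  pose proof (witness_is_pair _ _ _ _ _ Hw') as P'.
  destruct Hw as [_ [_ [_ (Hq & Hx & _)]]].
  destruct Hw' as [_ [_ [_ (Hq' & Hx' & _)]]].
  destruct (Rtotal_order d d') as [Hlt|[Heq|Hgt]]; [exfalso | exact Heq | exfalso].
  - pose proof (unlinked_left G c d' c d HW P' P ltac:(lra)). lra.
  - pose proof (unlinked_left G c d c d' HW P P' ltac:(lra)). lra.
Qed.

Definition nat_rat (n : nat) : R := INR (fst (of_nat n)) / INR (snd (of_nat n)).

Lemma nat_rat_dense a b : 0 <= a < b -> exists n, a < nat_rat n < b.
Proof.
  intros Hab.
  destruct (archimed_cor1 (b - a) ltac:(lra)) as [N [HN HN0]].
  assert (HNpos : 0 < INR N) by (apply lt_0_INR; exact HN0).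
  set (k := up (a * INR N)).
  assert (Hk : a * INR N < IZR k <= a * INR N + 1)
    by (destruct (archimed (a * INR N)); unfold k; lra).
  assert (Hk0 : (0 <= k)%Z) by (apply le_IZR; nra).
  exists (to_nat (Z.to_nat k, N)).
  unfold nat_rat. rewrite cancel_of_to. simpl.
  rewrite INR_IZR_INZ, Z2Nat.id by exact Hk0.
  assert (Hstep : 1 < (b - a) * INR N).
  { apply (Rmult_lt_compat_r (INR N)) in HN; [|exact HNpos].
    rewrite Rinv_l in HN by lra. exact HN. }
  split; apply (Rmult_lt_reg_r (INR N)); try exact HNpos;
    unfold Rdiv; rewrite Rmult_assoc, Rinv_l, Rmult_1_r by lra; lra.
Qed.

(* Every pair has a witness with rational coordinates: q is taken close
   enough to c, using h c = c and continuity of h at c. *)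
Lemma witness_exists G c d :
  is_subgroup_homeo01 G -> succ_fixed_pair G c d ->
  exists m k, pair_witness G c d (nat_rat m) (nat_rat k).
Proof.
  intros HG Hp.
  destruct (expanding_generator G c d HG Hp) as [h [Hh [Hs Hup]]].
  pose proof Hs as (Hc & Hcd & Hd & Hhc & _).
  destruct (nat_rat_dense c d ltac:(lra)) as [k Hk].
  set (x := nat_rat k) in *.
  destruct (homeo_continuous_at h c (x - c) (proj1 HG h Hh) ltac:(lra) ltac:(lra))
    as [del [Hdel Hnear]].
  destruct (nat_rat_dense c (Rmin (c + del) x)) as [m Hm].
  { split; [lra|]. apply Rmin_glb_lt; lra. }
  pose proof (Rmin_l (c + del) x). pose proof (Rmin_r (c + del) x).
  exists m, k, h. fold x. set (q := nat_rat m) in *.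
  split; [exact Hh|]. split; [exact Hs|].
  split; [split; lra|]. split; [lra|]. split; [|exact Hup].
  assert (Hclose : Rabs (q - c) < del) by (rewrite Rabs_right; lra).
  specialize (Hnear q ltac:(lra) Hclose). rewrite Hhc in Hnear.
  apply Rabs_def2 in Hnear. lra.
Qed.

Lemma countable_of_codes (S : R * R -> Prop) (P : R * R -> nat -> nat -> Prop) :
  (forall p, S p -> exists m k, P p m k) ->
  (forall p p' m k, S p -> S p' -> P p m k -> P p' m k -> p = p') ->
  at_most_countable S.
Proof.
  intros Hex Hdet.
  set (code := fun (p : R * R) (n : nat) => S p -> P p (fst (of_nat n)) (snd (of_nat n))).
  assert (Hcode : forall p, exists n, code p n).
  { intros p. destruct (classic (S p)) as [Hp|Hp].
    - destruct (Hex p Hp) as [m [k Hmk]].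
      exists (to_nat (m, k)). intros _. rewrite cancel_of_to. exact Hmk.
    - exists 0%nat. intros Hp'. contradiction. }
  exists (fun p => epsilon (inhabits 0%nat) (code p)).
  intros p p' Hp Hp' Heq.
  pose proof (epsilon_spec (inhabits 0%nat) _ (Hcode p) Hp) as C.
  pose proof (epsilon_spec (inhabits 0%nat) _ (Hcode p') Hp') as C'.
  rewrite Heq in C.
  exact (Hdet p p' _ _ Hp Hp' C C').
Qed.

Theorem propositionp (G : (R -> R) -> Prop) :
  is_subgroup_homeo01 G ->
  without_linked_fixed_points G ->
  at_most_countable (fun p => succ_fixed_pair G (fst p) (snd p)).
Proof.
  intros HG HW.
  apply (countable_of_codes _
           (fun p m k => pair_witness G (fst p) (snd p) (nat_rat m) (nat_rat k))).
  - intros p Hp. exact (witness_exists G _ _ HG Hp).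
  - intros [c d] [c' d'] m k _ _ Hw Hw'.
    destruct (witness_determines_pair G c d c' d' _ _ HG HW Hw Hw') as [-> ->].
    reflexivity.
Qed.
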